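(* Let $\mathfrak{g}_1,\dots,\mathfrak{g}_n$ be characteristically nilpotent Lie algebras which are $S$-algebras. Then $\mathfrak{g}_1\underline{\times}\mathfrak{g}_2\underline{\times}\cdots\underline{\times}\mathfrak{g}_n$ is a characteristically nilpotent Lie algebra.
   Context: All Lie algebras are finite-dimensional, complex, nilpotent and nonabelian. $C^1\mathfrak{g}=[\mathfrak{g},\mathfrak{g}]$. A nilpotent $\mathfrak{g}$ is characteristically nilpotent if $\mathfrak{g}^{[m]}=0$ for some $m$, where $\mathfrak{g}^{[1]}=\{f(Y): f\in\mathrm{Der}(\mathfrak{g}),Y\in\mathfrak{g}\}$ and $\mathfrak{g}^{[k]}=\mathrm{Der}(\mathfrak{g})(\mathfrak{g}^{[k-1]})$. Product by generators: for $\mathfrak{g}_1,\mathfrak{g}_2$ of dimensions $m_1,m_2$ take bases $\{X_1,\dots,X_{m_1}\}$, $\{X'_1,\dots,X'_{m_2}\}$ such that $X_1,\dots,X_{n_1}$ generate $\mathfrak{g}_1$ and $X_{n_1+1},\dots,X_{m_1}$ span $C^1\mathfrak{g}_1$, and similarly for $\mathfrak{g}_2$ with $n_2$ generators. $\mathfrak{g}_1\underline{\times}\mathfrak{g}_2$ is the Lie algebra on $\mathfrak{g}_1\oplus\mathfrak{g}_2\oplus\mathfrak{g}_3$, $\mathfrak{g}_3=\langle Z_1,\dots,Z_{n_1n_2}\rangle$, with the brackets of $\mathfrak{g}_1$ and of $\mathfrak{g}_2$, $[X_i,X'_j]=Z_{(i-1)n_2+j}$ for $i\le n_1$, $j\le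 n_2$, $[X_i,X'_j]=0$ otherwise, and $\mathfrak{g}_3$ central; its generators are $X_1,\dots,X_{n_1},X'_1,\dots,X'_{n_2}$. Iterated products are formed successively, $\mathfrak{g}_1\underline{\times}\cdots\underline{\times}\mathfrak{g}_k=(\mathfrak{g}_1\underline{\times}\cdots\underline{\times}\mathfrak{g}_{k-1})\underline{\times}\mathfrak{g}_k$. For $D$ a derivation of $\mathfrak{g}_1\underline{\times}\mathfrak{g}_2$ write $D_{21}=p_2D|_{\mathfrak{g}_1}$ with $p_2$ the projection onto $\mathfrak{g}_2$. A nilpotent Lie algebra $\mathfrak{g}_1$ is an $S$-algebra if for every Lie algebra $\mathfrak{g}_2$ and every derivation $D$ of $\mathfrak{g}_1\underline{\times}\mathfrak{g}_2$ one has $D_{21}(\mathfrak{g}_1)\subset C^1\mathfrak{g}_2$. *)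

From HB Require Import structures.
From mathcomp Require Import all_boot all_order all_algebra.
From mathcomp Require Import complex.
From mathcomp Require Import reals.
Set Implicit Arguments. Unset Strict Implicit. Unset Printing Implicit Defensive.
Import Order.TTheory GRing.Theory Num.Theory.
Local Open Scope ring_scope.

(* A finite-dimensional Lie algebra over K, given in coordinates with respect
   to a chosen ordered basis X_1,...,X_(lg+lr): the first [lg] basis vectors are
   the chosen generators, the last [lr] are meant to span C^1 g. *)
Record lieb (K : fieldType) := Lieb {
  lg : nat;
  lr : nat;
  lbr : 'rV[K]_(lg + lr) -> 'rV[K]_(lg + lr) -> 'rV[K]_(lg + lr) }.

Section LieDefs.
Variable K : fieldType.
Implicit Types L : lieb K.

Notation V L := 'rV[K]_(lg L + lr L).

Definition is_lie L : Prop :=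
  [/\ (forall (a : K) (x y z : V L), lbr (a *: x + y) z = a *: lbr x z + lbr y z),
      (forall (a : K) (x y z : V L), lbr z (a *: x + y) = a *: lbr z x + lbr z y),
      (forall x : V L, lbr x x = 0) &
      (forall x y z : V L,
          lbr x (lbr y z) + lbr y (lbr z x) + lbr z (lbr x y) = 0)].

Definition inC1 L (v : V L) : Prop :=
  exists (k : nat) (a : 'I_k -> K) (xs ys : 'I_k -> V L),
    v = \sum_(i < k) a i *: lbr (xs i) (ys i).

(* the basis is adapted: the last lr basis vectors span C^1 g
   (i.e. C^1 g is exactly the set of vectors with zero generator coordinates);
   for nilpotent g the first lg basis vectors then generate g *)
Definition adapted L : Prop :=
  forall v : V L, inC1 v <-> lsubmx v = 0.

Definition nilpotent L : Prop :=
  exists N : nat, forall (xs : seq (V L)) (y : V L),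
    size xs = N -> foldr (@lbr K L) y xs = 0.

Definition nonabelian L : Prop := exists x y : V L, lbr x y != 0.

Definition is_der L (D : 'M[K]_(lg L + lr L)) : Prop :=
  forall x y : V L, lbr x y *m D = lbr (x *m D) y + lbr x (y *m D).

Fixpoint charseq L (k : nat) (v : V L) : Prop :=
  match k with
  | 0 => True
  | k'.+1 => exists (D : 'M[K]_(lg L + lr L)) (Y : V L),
               [/\ is_der D, charseq k' Y & v = Y *m D]
  end.

Definition char_nilpotent L : Prop :=
  exists m : nat, forall v : V L, charseq m v -> v = 0.

(* The basis of g1 x g2 is ordered as
     X_1..X_n1, X'_1..X'_n2 (generators),
     X_(n1+1)..X_m1, X'_(n2+1)..X'_m2, Z_1..Z_(n1 n2)
   with Z_((i-1) n2 + j) = [X_i, X'_j] (mxvec_index i j). *)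
Section Product.
Variables L1 L2 : lieb K.
Local Notation n1 := (lg L1). Local Notation r1 := (lr L1).
Local Notation n2 := (lg L2). Local Notation r2 := (lr L2).
Local Notation W := 'rV[K]_((n1 + n2) + (r1 + r2 + n1 * n2)).

Definition pr1 (x : W) : V L1 :=
  row_mx (lsubmx (lsubmx x)) (lsubmx (lsubmx (rsubmx x))).
Definition pr2 (x : W) : V L2 :=
  row_mx (rsubmx (lsubmx x)) (rsubmx (lsubmx (rsubmx x))).
Definition pr3 (x : W) : 'rV[K]_(n1 * n2) := rsubmx (rsubmx x).
Definition emb (a1 : V L1) (a2 : V L2) (z : 'rV[K]_(n1 * n2)) : W :=
  row_mx (row_mx (lsubmx a1) (lsubmx a2))
         (row_mx (row_mx (rsubmx a1) (rsubmx a2)) z).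

Definition prod_br (x y : W) : W :=
  emb (lbr (pr1 x) (pr1 y)) (lbr (pr2 x) (pr2 y))
      (mxvec (\matrix_(i < n1, j < n2)
          ((lsubmx (pr1 x)) 0 i * (lsubmx (pr2 y)) 0 j
           - (lsubmx (pr1 y)) 0 i * (lsubmx (pr2 x)) 0 j))).

Definition prodg : lieb K := @Lieb K (n1 + n2) (r1 + r2 + n1 * n2) prod_br.

End Product.

Definition iter_prodg (L : lieb K) (Ls : seq (lieb K)) : lieb K :=
  foldl prodg L Ls.

Definition std_lie L : Prop :=
  [/\ is_lie L, adapted L, nilpotent L & nonabelian L].

Definition S_algebra (L1 : lieb K) : Prop :=
  forall L2 : lieb K, std_lie L2 ->
  forall D : 'M[K]_(lg (prodg L1 L2) + lr (prodg L1 L2)),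
    is_der D ->
    forall a : V L1, inC1 (pr2 (emb a 0 0 *m D)).

End LieDefs.

(* A derivation D of g_1 x g_2 induces derivations D_11 = p_1 D|g_1 of g_1
   and D_22 = p_2 D|g_2 of g_2 ([der11], [der22]). Because g_1 and g_2 are
   S-algebras, the off-diagonal blocks D_12 and D_21 take values in C^1, and
   D maps g_3, which lies in C^1, into C^1. Modulo C^1 a product of k
   derivations of g_1 x g_2 thus acts on generators like a product of k
   derivations of g_1 and of g_2, so if g_1^[m_1] = g_2^[m_2] = 0 every
   product of max(m_1, m_2) + 1 derivations maps g_1 x g_2 into C^1. A
   nilpotent Lie algebra in which every product of m derivations maps into
   C^1 is characteristically nilpotent: by Leibniz, a long product of
   derivations applied to a nested bracket puts m of them on a single entry,
   which then lies in C^1, and Jacobi rewrites the bracket as longer ones.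
   The product of two S-algebras is again an S-algebra, by transporting the
   S-property along the isomorphisms (g_1 x g_2) x g ~ g_1 x (g_2 x g) ~
   g_2 x (g_1 x g); induction on the number of factors concludes. *)

From Pilot Require Import Defs.
From HB Require Import structures.
From mathcomp Require Import all_boot all_order all_algebra.
From mathcomp Require Import complex.
From mathcomp Require Import reals.
From mathcomp Require Import zify.
Set Implicit Arguments. Unset Strict Implicit. Unset Printing Implicit Defensive.
Import Order.TTheory GRing.Theory Num.Theory.
Local Open Scope ring_scope.

Section LinearRowFun.
Variables (K : fieldType) (m n : nat) (f : 'rV[K]_m -> 'rV[K]_n).
Hypothesis f_lin : linear f.

Let F : {linear 'rV[K]_m -> 'rV[K]_n} :=
  HB.pack_for {linear _ -> _} f (GRing.isLinear.Build K _ _ _ f f_lin).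

Lemma linf0 : f 0 = 0. Proof. exact: (linear0 F). Qed.
Lemma linfD x y : f (x + y) = f x + f y. Proof. exact: (linearD F). Qed.
Lemma linfZ a x : f (a *: x) = a *: f x. Proof. exact: (linearZZ F). Qed.
Lemma linfN x : f (- x) = - f x. Proof. exact: (linearN F). Qed.
Lemma linfB x y : f (x - y) = f x - f y. Proof. exact: (linearB F). Qed.
Lemma linf_sum I (r : seq I) (P : pred I) (E : I -> 'rV[K]_m) :
  f (\sum_(i <- r | P i) E i) = \sum_(i <- r | P i) f (E i).
Proof. exact: (linear_sum F). Qed.
Lemma mul_rV_lin1f u : u *m lin1_mx f = f u. Proof. exact: (mul_rV_lin1 F). Qed.

End LinearRowFun.

Lemma linear_comp (K : fieldType) m n p (f : 'rV[K]_m -> 'rV[K]_n)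
    (g : 'rV[K]_n -> 'rV[K]_p) :
  linear f -> linear g -> linear (fun x => g (f x)).
Proof. by move=> f_lin g_lin a x y; rewrite f_lin g_lin. Qed.

Lemma linear_mulmxr (K : fieldType) m n (M : 'M[K]_(m, n)) :
  linear (fun x : 'rV_m => x *m M).
Proof. exact: linearP (mulmxr M). Qed.

Section InC1.
Variables (K : fieldType) (L : lieb K).
Local Notation V := 'rV[K]_(lg L + lr L).

Lemma inC1_0 : inC1 (0 : V).
Proof. by exists 0%N, (fun=> 0), (fun=> 0), (fun=> 0); rewrite big_ord0. Qed.

Lemma inC1_br (x y : V) : inC1 (lbr x y).
Proof. by exists 1%N, (fun=> 1), (fun=> x), (fun=> y); rewrite big_ord1 scale1r. Qed.

Lemma inC1Z a (v : V) : inC1 v -> inC1 (a *: v).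
Proof.
case=> k [b [xs [ys ->]]]; exists k, (fun i => a * b i), xs, ys.
by rewrite scaler_sumr; apply: eq_bigr => i _; rewrite scalerA.
Qed.

Lemma inC1D (u v : V) : inC1 u -> inC1 v -> inC1 (u + v).
Proof.
case=> k1 [a1 [x1 [y1 ->]]]; case=> k2 [a2 [x2 [y2 ->]]].
pose glue T (f1 : 'I_k1 -> T) (f2 : 'I_k2 -> T) i :=
  match split i with inl j => f1 j | inr j => f2 j end.
exists (k1 + k2)%N, (glue _ a1 a2), (glue _ x1 x2), (glue _ y1 y2).
rewrite big_split_ord /glue; congr (_ + _); apply: eq_bigr => i _.
  by rewrite (unsplitK (inl i)).
by rewrite (unsplitK (inr i)).
Qed.

Lemma inC1_sum I (r : seq I) (P : pred I) (F : I -> V) :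
  (forall i, P i -> inC1 (F i)) -> inC1 (\sum_(i <- r | P i) F i).
Proof.
move=> F_C1; elim/big_rec: _ => [|i x Pi x_C1]; first exact: inC1_0.
by apply: inC1D => //; apply: F_C1.
Qed.

Lemma inC1_der D (v : V) : is_der D -> inC1 v -> inC1 (v *m D).
Proof.
move=> D_der [k [a [xs [ys ->]]]]; rewrite mulmx_suml; apply: inC1_sum => i _.
by rewrite -scalemxAl D_der; apply/inC1Z/inC1D; apply: inC1_br.
Qed.

Lemma lsub_br (x y : V) : adapted L -> lsubmx (lbr x y) = 0.
Proof. by move=> adL; apply/adL/inC1_br. Qed.

Lemma lsub_der_eq D (u u' : V) : adapted L -> is_der D ->
  lsubmx u = lsubmx u' -> lsubmx (u *m D) = lsubmx (u' *m D).
Proof.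
move=> adL D_der eq_uu'; apply/eqP; rewrite -subr_eq0 -linearB -mulmxBl.
by apply/eqP/adL/inC1_der/adL => //; rewrite linearB /= eq_uu' subrr.
Qed.

End InC1.

Section LieAlgebra.
Variables (K : fieldType) (L : lieb K).
Hypothesis L_lie : is_lie L.
Local Notation V := 'rV[K]_(lg L + lr L).
Local Notation br := (@lbr K L).
Implicit Types (x y z p q : V).

Lemma linear_brl y : linear (fun x => br x y).
Proof. by case: L_lie => brlD _ _ _ a x z; rewrite brlD. Qed.
Lemma linear_brr x : linear (fun y => br x y).
Proof. by case: L_lie => _ brrD _ _ a y z; rewrite brrD. Qed.

Lemma br0l y : br 0 y = 0. Proof. exact: linf0 (linear_brl y). Qed.
Lemma br0r x : br x 0 = 0. Proof. exact: linf0 (linear_brr x). Qed.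
Lemma brBr x y z : br x (y - z) = br x y - br x z.
Proof. by rewrite (linfB (linear_brr x)). Qed.

Lemma br_anticomm x y : br y x = - br x y.
Proof.
case: L_lie => _ _ brxx _; have := brxx (x + y).
rewrite (linfD (linear_brl _)) !(linfD (linear_brr _)) !brxx add0r addr0.
by move/eqP; rewrite addr_eq0 => /eqP ->; rewrite opprK.
Qed.

Lemma br_jacobi p q z : br (br p q) z = br p (br q z) - br q (br p z).
Proof.
case: L_lie => _ _ _ jacobi; have := jacobi p q z.
rewrite [br z (br p q)]br_anticomm [br z p]br_anticomm (linfN (linear_brr _)).
by move/eqP; rewrite subr_eq0 => /eqP <-.
Qed.

Definition nested_br (xs : seq V) y := foldr br y xs.

Lemma linear_nested_br_slot xs1 xs2 y :
  linear (fun x => nested_br (xs1 ++ x :: xs2) y).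
Proof.
elim: xs1 => [|z xs1 IH] /=; first exact: linear_brl.
exact: linear_comp IH (linear_brr z).
Qed.

Lemma linear_nested_br_last xs : linear (nested_br xs).
Proof.
elim: xs => [|z xs IH] /=; first by [].
exact: linear_comp IH (linear_brr z).
Qed.

Lemma nested_br_jacobi xs1 xs2 p q y :
  nested_br (xs1 ++ br p q :: xs2) y =
  nested_br (xs1 ++ p :: q :: xs2) y - nested_br (xs1 ++ q :: p :: xs2) y.
Proof. by elim: xs1 => [|z xs1 IH] /=; [exact: br_jacobi | rewrite IH brBr]. Qed.

Lemma nested_br_rcons xs p q : nested_br (rcons xs p) q = nested_br xs (br p q).
Proof. exact: foldr_rcons. Qed.

Lemma nested_br_eq0_leq N :
  (forall xs y, size xs = N -> nested_br xs y = 0) ->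
  forall xs y, (N <= size xs)%N -> nested_br xs y = 0.
Proof.
move=> nilN xs y leN; have sz_drop : size (drop (size xs - N) xs) = N.
  by rewrite size_drop; lia.
rewrite -(cat_take_drop (size xs - N) xs) /nested_br foldr_cat.
by rewrite [foldr _ _ (drop _ _)]nilN //; elim: (take _ _) => //= x s ->; rewrite br0r.
Qed.

Lemma der_nested_br D xs y : is_der D ->
  nested_br xs y *m D =
    \sum_(i < size xs) nested_br (take i xs ++ nth 0 xs i *m D :: drop i.+1 xs) y
    + nested_br xs (y *m D).
Proof.
move=> D_der; elim: xs => [|x xs IH] /=; first by rewrite big_ord0 add0r.
rewrite D_der IH big_ord_recl /= drop0 -!addrA; congr (_ + _).
by rewrite (linfD (linear_brr x)) (linf_sum (linear_brr x)).
Qed.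

End LieAlgebra.

Section DerivationWords.
Variables (K : fieldType) (L : lieb K).
Local Notation V := 'rV[K]_(lg L + lr L).
Local Notation M := 'M[K]_(lg L + lr L).
Implicit Types (u v x : V) (w : seq M).

Fixpoint all_der (w : seq M) : Prop :=
  if w is D :: w' then is_der D /\ all_der w' else True.

Definition apply_word (v : V) (w : seq M) : V := foldl (fun x D => x *m D) v w.

Lemma all_der_rcons w D : all_der (rcons w D) <-> all_der w /\ is_der D.
Proof. by elim: w => [|E w IH] /=; [tauto | rewrite IH; tauto]. Qed.

Lemma apply_word_rcons v w D : apply_word v (rcons w D) = apply_word v w *m D.
Proof. exact: foldl_rcons. Qed.

Lemma linear_apply_word w : linear (apply_word^~ w).
Proof.
elim: w => [|D w IH] a x y //=.
by rewrite /apply_word /= -!/(apply_word _ _) -IH mulmxDl scalemxAl.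
Qed.

Lemma apply_word0 w : apply_word 0 w = 0.
Proof. exact: linf0 (linear_apply_word w). Qed.

Lemma apply_word_sum_eq0 I (r : seq I) (P : pred I) (F : I -> V) w :
  (forall i, P i -> apply_word (F i) w = 0) ->
  apply_word (\sum_(i <- r | P i) F i) w = 0.
Proof. by move=> F0; rewrite (linf_sum (linear_apply_word w)) big1. Qed.

Definition word_image c (x : V) :=
  exists u w, [/\ all_der w, size w = c & x = apply_word u w].

Lemma word_image0 x : word_image 0 x.
Proof. by exists x, [::]. Qed.

Lemma word_imageS c x D : is_der D -> word_image c x -> word_image c.+1 (x *m D).
Proof.
move=> D_der [u [w [w_der <- ->]]]; exists u, (rcons w D).
by split; [exact/all_der_rcons | rewrite size_rcons | rewrite apply_word_rcons].
Qed.

Lemma charseq_word_image k v : charseq k v -> word_image k v.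
Proof.
elim: k v => [|k IH] v /=; first by move=> _; apply: word_image0.
by case=> D [Y [D_der /IH Y_im ->]]; apply: word_imageS.
Qed.

Lemma charseq_leq k j v : (k <= j)%N -> charseq j v -> charseq k v.
Proof.
move/subnKC <-; move: (j - k)%N => d; elim: k v => [|k IH] v //=.
by case=> D [Y [D_der /IH Y_k ->]]; exists D, Y.
Qed.

End DerivationWords.

Section WordCriterion.
Variables (K : fieldType) (L : lieb K).
Hypothesis L_lie : is_lie L.
Local Notation V := 'rV[K]_(lg L + lr L).
Local Notation M := 'M[K]_(lg L + lr L).
Implicit Types (x y : V) (xs : seq V) (w : seq M) (ps : seq (V * nat)).

Variables (N m : nat).
Hypothesis L_nil : forall xs y, size xs = N -> nested_br xs y = 0.
Hypothesis word_image_inC1 : forall x, word_image m x -> inC1 x.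
Hypothesis m_gt0 : (0 < m)%N.

(* A slot (x, c) is an entry x of a nested bracket known to be the image of
   c < m derivations; Leibniz raises one counter per derivation, and a counter
   reaching m puts its entry in C^1, which lengthens the bracket.  A bracket
   has at most N + 1 slots, whence the budget of N.+1 * m derivations per
   bracket length. *)
Let budget n := ((N - n) * (N.+1 * m))%N.

Definition words_kill n := forall xs y w, size xs = n -> all_der w ->
  (budget n <= size w)%N -> apply_word (nested_br xs y) w = 0.

Definition slot_ok (s : V * nat) := (s.2 < m)%N /\ word_image s.2 s.1.

Definition potential ps c := (sumn [seq m - s.2 | s <- ps] + (m - c))%N.

Definition slots_kill n w := forall ps y c, size ps = n ->
  {in ps, forall s, slot_ok s} -> slot_ok (y, c) ->
  (potential ps c + budget n.+1 <= size w)%N ->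
  apply_word (nested_br (map fst ps) y) w = 0.

Lemma words_killN : words_kill N.
Proof. by move=> xs y w sz_xs _ _; rewrite L_nil // apply_word0. Qed.

Lemma words_kill_inC1_slot n xs1 x xs2 y w : words_kill n.+1 ->
  size (xs1 ++ x :: xs2) = n -> inC1 x -> all_der w -> (budget n.+1 <= size w)%N ->
  apply_word (nested_br (xs1 ++ x :: xs2) y) w = 0.
Proof.
move=> kill1 sz [k [a [ps [qs ->]]]] w_der budget_w.
rewrite (linf_sum (linear_nested_br_slot L_lie xs1 xs2 y)).
apply: apply_word_sum_eq0 => i _.
rewrite (linfZ (linear_nested_br_slot L_lie xs1 xs2 y)) (linfZ (linear_apply_word w)).
rewrite nested_br_jacobi // (linfB (linear_apply_word w)).
by rewrite !kill1 ?subrr ?scaler0 // !size_cat /= -sz size_cat /= addnS.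
Qed.

Lemma words_kill_inC1_last n xs y w : words_kill n.+1 ->
  size xs = n -> inC1 y -> all_der w -> (budget n.+1 <= size w)%N ->
  apply_word (nested_br xs y) w = 0.
Proof.
move=> kill1 sz [k [a [ps [qs ->]]]] w_der budget_w.
rewrite (linf_sum (linear_nested_br_last L_lie xs)); apply: apply_word_sum_eq0 => i _.
rewrite (linfZ (linear_nested_br_last L_lie xs)) (linfZ (linear_apply_word w)).
by rewrite -nested_br_rcons kill1 ?scaler0 // size_rcons sz.
Qed.

Lemma slots_kill_nil n : slots_kill n [::].
Proof.
by move=> ps y c _ _ [/= c_lt _] pot; exfalso; move: pot; rewrite /potential; lia.
Qed.

Section SlotsKillCons.
Variables (n : nat) (D : M) (w : seq M).
Hypotheses (kill1 : words_kill n.+1) (D_der : is_der D) (w_der : all_der w).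
Hypothesis killw : slots_kill n w.
Variables (ps : seq (V * nat)) (y : V) (c : nat).
Hypotheses (sz_ps : size ps = n) (ps_ok : {in ps, forall s, slot_ok s}).
Hypotheses (y_ok : slot_ok (y, c)).
Hypothesis pot_w : (potential ps c + budget n.+1 <= (size w).+1)%N.

Lemma slots_kill_slot i : (i < n)%N ->
  apply_word (nested_br (take i (map fst ps) ++ nth 0 (map fst ps) i *m D
                          :: drop i.+1 (map fst ps)) y) w = 0.
Proof.
move=> lt_in; have lt_i : (i < size ps)%N by rewrite sz_ps.
case E: (nth (0, 0%N) ps i) => [x d].
have ps_split : ps = take i ps ++ (x, d) :: drop i.+1 ps.
  by rewrite -E -drop_nth // cat_take_drop.
have [/= d_lt x_im] : slot_ok (x, d) by apply: ps_ok; rewrite -E mem_nth.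
have sumn_split : sumn [seq (m - s.2)%N | s <- ps] =
    (sumn [seq (m - s.2)%N | s <- take i ps] + (m - d)
     + sumn [seq (m - s.2)%N | s <- drop i.+1 ps])%N.
  by rewrite {1}ps_split map_cat sumn_cat /= addnA.
have sz_take : size (take i ps) = i by rewrite size_take lt_i.
have sz_drop : size (drop i.+1 ps) = (n - i.+1)%N by rewrite size_drop sz_ps.
move: pot_w; rewrite /potential sumn_split (nth_map (0, 0%N)) // E /=.
rewrite -map_take -map_drop => pot.
have [dS_lt | dS_ge] := ltnP d.+1 m.
  set ps' := take i ps ++ (x *m D, d.+1) :: drop i.+1 ps.
  have -> : map fst (take i ps) ++ x *m D :: map fst (drop i.+1 ps) = map fst ps'.
    by rewrite map_cat.
  apply: (killw _ _ y_ok).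
  - by rewrite size_cat /= sz_take sz_drop; lia.
  - move=> s; rewrite mem_cat inE => /orP [/mem_take | /orP [/eqP -> | /mem_drop]].
    + exact: ps_ok.
    + by split=> //=; apply: word_imageS.
    + exact: ps_ok.
  - move: pot; rewrite /potential map_cat sumn_cat /=.
    move: (sumn _) (sumn _) (budget _) => a1 a2 a3; lia.
have x_C1 : inC1 (x *m D).
  apply: word_image_inC1; have -> : m = d.+1 by lia.
  exact: word_imageS.
apply: (words_kill_inC1_slot (n := n)) => //; last by move: pot; lia.
by rewrite size_cat /= !size_map sz_take sz_drop; lia.
Qed.

Lemma slots_kill_last : apply_word (nested_br (map fst ps) (y *m D)) w = 0.
Proof.
case: y_ok => /= c_lt y_im; have yD_im := word_imageS D_der y_im.
have [cS_lt | cS_ge] := ltnP c.+1 m.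
  apply: (killw (c := c.+1) sz_ps ps_ok) => //.
  by move: pot_w; rewrite /potential; lia.
apply: (words_kill_inC1_last (n := n)); rewrite ?size_map //.
  by apply: word_image_inC1; have -> : m = c.+1; [lia | exact: yD_im].
by move: pot_w; rewrite /potential; lia.
Qed.

End SlotsKillCons.

Lemma slots_kill_all n w : words_kill n.+1 -> all_der w -> slots_kill n w.
Proof.
move=> kill1; elim: w => [|D w IH] /=; first by move=> _; apply: slots_kill_nil.
case=> D_der w_der ps y c sz_ps ps_ok y_ok pot_w.
rewrite /apply_word /= -/(apply_word _ w) der_nested_br //.
rewrite (linfD (linear_apply_word w)) -[RHS]addr0; congr (_ + _).
  apply: apply_word_sum_eq0 => i _.
  apply: (slots_kill_slot kill1 D_der w_der (IH w_der) sz_ps ps_ok y_ok pot_w).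
  by rewrite -sz_ps -(size_map fst).
exact: (slots_kill_last kill1 D_der w_der (IH w_der) sz_ps ps_ok y_ok pot_w).
Qed.

Lemma budgetS n : (n < N)%N -> budget n = (budget n.+1 + N.+1 * m)%N.
Proof. by move=> lt_nN; rewrite /budget -mulSnr; congr (_ * _)%N; lia. Qed.

Lemma potential_fresh xs : potential [seq (x, 0%N) | x <- xs] 0 = ((size xs).+1 * m)%N.
Proof.
rewrite /potential subn0 mulSn addnC; congr (_ + _)%N.
by elim: xs => //= x xs ->; rewrite subn0 mulSn.
Qed.

Lemma words_kill_step n : (n < N)%N -> words_kill n.+1 -> words_kill n.
Proof.
move=> lt_nN kill1 xs y w sz_xs w_der budget_w.
have -> : xs = map fst [seq (x, 0%N) | x <- xs] by rewrite -map_comp map_id.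
apply: (@slots_kill_all n w kill1 w_der _ y 0%N); rewrite ?size_map //.
- by move=> s /mapP [x _ ->]; split=> //=; apply: word_image0.
- by split=> //=; apply: word_image0.
rewrite potential_fresh sz_xs; move: budget_w; rewrite budgetS //.
have : (n.+1 * m <= N.+1 * m)%N by rewrite leq_mul2r ltnW ?orbT.
by move: (N.+1 * m)%N (n.+1 * m)%N => a b; lia.
Qed.

Lemma words_kill0 : words_kill 0.
Proof.
suff kill_sub d : (d <= N)%N -> words_kill (N - d) by rewrite -(subnn N); apply: kill_sub.
elim: d => [|d IH] le_dN; first by rewrite subn0; apply: words_killN.
apply: words_kill_step; first by lia.
have -> : ((N - d.+1).+1 = N - d)%N by lia.
by apply: IH; lia.
Qed.

Lemma char_nilpotent_of_word_image_inC1 : char_nilpotent L.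
Proof.
exists (budget 0) => v /charseq_word_image [u [w [w_der sz_w ->]]].
by have := @words_kill0 [::] u w erefl w_der; rewrite sz_w; apply.
Qed.

End WordCriterion.

Section Product.
Variables (K : fieldType) (A B : lieb K).
Local Notation nA := (lg A). Local Notation nB := (lg B).
Local Notation VA := 'rV[K]_(lg A + lr A).
Local Notation VB := 'rV[K]_(lg B + lr B).
Local Notation W := 'rV[K]_((nA + nB) + (lr A + lr B + nA * nB)).
Local Notation Z := 'rV[K]_(nA * nB).
Local Notation pr1 := (@pr1 K A B).
Local Notation pr2 := (@pr2 K A B).
Local Notation pr3 := (@pr3 K A B).
Local Notation emb := (@emb K A B).
Local Notation prod_br := (@prod_br K A B).
Implicit Types (x y : W) (a : VA) (b : VB) (z : Z).

Lemma pr1_emb a b z : pr1 (emb a b z) = a.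
Proof. by rewrite /Defs.pr1 /Defs.emb !(row_mxKl, row_mxKr) hsubmxK. Qed.
Lemma pr2_emb a b z : pr2 (emb a b z) = b.
Proof. by rewrite /Defs.pr2 /Defs.emb !(row_mxKl, row_mxKr) hsubmxK. Qed.
Lemma pr3_emb a b z : pr3 (emb a b z) = z.
Proof. by rewrite /Defs.pr3 /Defs.emb !row_mxKr. Qed.
Lemma emb_pr x : emb (pr1 x) (pr2 x) (pr3 x) = x.
Proof. by rewrite /Defs.emb /Defs.pr1 /Defs.pr2 /Defs.pr3 !(row_mxKl, row_mxKr) !hsubmxK. Qed.

Lemma prod_vec_ext x y : pr1 x = pr1 y -> pr2 x = pr2 y -> pr3 x = pr3 y -> x = y.
Proof. by move=> eq1 eq2 eq3; rewrite -(emb_pr x) -(emb_pr y) eq1 eq2 eq3. Qed.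

Lemma linear_pr1 : linear pr1.
Proof. by move=> c x y; rewrite /Defs.pr1 !linearP /= scale_row_mx add_row_mx. Qed.
Lemma linear_pr2 : linear pr2.
Proof. by move=> c x y; rewrite /Defs.pr2 !linearP /= scale_row_mx add_row_mx. Qed.
Lemma linear_pr3 : linear pr3.
Proof. by move=> c x y; rewrite /Defs.pr3 !linearP. Qed.

Lemma emb_linearP c a1 b1 z1 a2 b2 z2 :
  emb (c *: a1 + a2) (c *: b1 + b2) (c *: z1 + z2) = c *: emb a1 b1 z1 + emb a2 b2 z2.
Proof.
apply: prod_vec_ext.
- by rewrite linear_pr1 !pr1_emb.
- by rewrite linear_pr2 !pr2_emb.
- by rewrite linear_pr3 !pr3_emb.
Qed.

Lemma emb0 : emb 0 0 0 = 0.
Proof.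
by rewrite -[RHS]emb_pr (linf0 linear_pr1) (linf0 linear_pr2) (linf0 linear_pr3).
Qed.

Lemma lsub_emb a b z : lsubmx (emb a b z) = row_mx (lsubmx a) (lsubmx b).
Proof. by rewrite /Defs.emb row_mxKl. Qed.

Lemma lsub_pr x : lsubmx x = row_mx (lsubmx (pr1 x)) (lsubmx (pr2 x)).
Proof. by rewrite -{1}(emb_pr x) lsub_emb. Qed.

Definition cross_mx x y : 'M[K]_(nA, nB) :=
  (lsubmx (pr1 x))^T *m lsubmx (pr2 y) - (lsubmx (pr1 y))^T *m lsubmx (pr2 x).

Lemma outer_mxE (u u' : 'rV[K]_nA) (v v' : 'rV[K]_nB) :
  \matrix_(i < nA, j < nB) (u 0 i * v 0 j - u' 0 i * v' 0 j) = u^T *m v - u'^T *m v'.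
Proof.
apply/matrixP => i j; rewrite !mxE !big_ord1 !mxE.
by congr (_ * _ - _ * _); congr (_ _ _); apply/val_inj; case: (_ : 'I_1) => -[].
Qed.

Lemma prod_brE x y :
  prod_br x y = emb (lbr (pr1 x) (pr1 y)) (lbr (pr2 x) (pr2 y)) (mxvec (cross_mx x y)).
Proof. by rewrite /Defs.prod_br outer_mxE. Qed.

Lemma pr1_br x y : pr1 (prod_br x y) = lbr (pr1 x) (pr1 y).
Proof. by rewrite prod_brE pr1_emb. Qed.
Lemma pr2_br x y : pr2 (prod_br x y) = lbr (pr2 x) (pr2 y).
Proof. by rewrite prod_brE pr2_emb. Qed.
Lemma pr3_br x y : pr3 (prod_br x y) = mxvec (cross_mx x y).
Proof. by rewrite prod_brE pr3_emb. Qed.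

Lemma cross_mxDl c x y u : cross_mx (c *: x + y) u = c *: cross_mx x u + cross_mx y u.
Proof.
rewrite /cross_mx linear_pr1 linear_pr2 !linearP /= mulmxDl -scalemxAl.
by rewrite scalerN addrACA scalerBr.
Qed.

Lemma cross_mxDr c x y u : cross_mx u (c *: x + y) = c *: cross_mx u x + cross_mx u y.
Proof.
rewrite /cross_mx linear_pr1 linear_pr2 !linearP /= mulmxDl -scalemxAl.
by rewrite opprD addrACA scalerBr.
Qed.

Lemma cross_mx_gen0r x y : lsubmx (pr1 y) = 0 -> lsubmx (pr2 y) = 0 -> cross_mx x y = 0.
Proof. by move=> gen1 gen2; rewrite /cross_mx gen1 gen2 trmx0 mul0mx mulmx0 subrr. Qed.

Section ProductLie.
Hypotheses (A_lie : is_lie A) (B_lie : is_lie B).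
Hypotheses (A_ad : adapted A) (B_ad : adapted B).

Lemma prod_is_lie : is_lie (prodg A B).
Proof.
split => /=.
- move=> c x y u; apply: prod_vec_ext.
  + by rewrite linear_pr1 !pr1_br linear_pr1 (linear_brl A_lie).
  + by rewrite linear_pr2 !pr2_br linear_pr2 (linear_brl B_lie).
  + by rewrite linear_pr3 !pr3_br cross_mxDl linearP.
- move=> c x y u; apply: prod_vec_ext.
  + by rewrite linear_pr1 !pr1_br linear_pr1 (linear_brr A_lie).
  + by rewrite linear_pr2 !pr2_br linear_pr2 (linear_brr B_lie).
  + by rewrite linear_pr3 !pr3_br cross_mxDr linearP.
- move=> x; rewrite prod_brE /cross_mx subrr linear0.
  by case: A_lie => _ _ -> _; case: B_lie => _ _ -> _; rewrite emb0.
- move=> x y u; apply: prod_vec_ext.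
  + by rewrite !(linfD linear_pr1) !pr1_br (linf0 linear_pr1); case: A_lie.
  + by rewrite !(linfD linear_pr2) !pr2_br (linf0 linear_pr2); case: B_lie.
  + rewrite !(linfD linear_pr3) !pr3_br (linf0 linear_pr3) !cross_mx_gen0r ?linear0 ?addr0 //.
    all: by rewrite ?pr1_br ?pr2_br lsub_br.
Qed.

Lemma linear_emb1 : linear (fun a : VA => emb a 0 0).
Proof. by move=> c a1 a2; rewrite -emb_linearP !(scaler0, addr0). Qed.
Lemma linear_emb2 : linear (fun b : VB => emb 0 b 0).
Proof. by move=> c b1 b2; rewrite -emb_linearP !(scaler0, addr0). Qed.
Lemma linear_emb3 : linear (fun z : Z => emb 0 0 z).
Proof. by move=> c z1 z2; rewrite -emb_linearP !(scaler0, addr0). Qed.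

Lemma emb_split a b z : emb a b z = emb a 0 0 + emb 0 b 0 + emb 0 0 z.
Proof.
apply: prod_vec_ext; rewrite !(linfD linear_pr1, linfD linear_pr2, linfD linear_pr3).
all: by rewrite !(pr1_emb, pr2_emb, pr3_emb) ?addr0 ?add0r.
Qed.

Lemma br_emb1 a a' : prod_br (emb a 0 0) (emb a' 0 0) = emb (lbr a a') 0 0.
Proof.
rewrite prod_brE !pr1_emb !pr2_emb br0l // /cross_mx !pr1_emb !pr2_emb.
by rewrite linear0 !mulmx0 subrr linear0.
Qed.

Lemma br_emb2 b b' : prod_br (emb 0 b 0) (emb 0 b' 0) = emb 0 (lbr b b') 0.
Proof.
rewrite prod_brE !pr1_emb !pr2_emb br0l // /cross_mx !pr1_emb !pr2_emb.
by rewrite linear0 trmx0 !mul0mx subrr linear0.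
Qed.

Lemma br_emb_generators (i : 'I_nA) (j : 'I_nB) :
  prod_br (emb (row_mx (delta_mx 0 i) 0) 0 0) (emb 0 (row_mx (delta_mx 0 j) 0) 0) =
  emb 0 0 (mxvec (delta_mx i j)).
Proof.
rewrite prod_brE !pr1_emb !pr2_emb br0r // br0l //; congr emb.
rewrite /cross_mx !pr1_emb !pr2_emb !row_mxKl linear0 trmx0 mul0mx subr0.
by rewrite trmx_delta mul_delta_mx.
Qed.

Lemma prod_adapted : adapted (prodg A B).
Proof.
move=> v; split.
  case=> k [c [xs [ys ->]]] /=; rewrite linear_sum big1 // => i _.
  by rewrite linearZ /= prod_brE lsub_emb !lsub_br // row_mx0 scaler0.
move=> /= v_gen0; have : row_mx (lsubmx (pr1 v)) (lsubmx (pr2 v)) = 0 by rewrite -lsub_pr.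
rewrite -row_mx0 => /eq_row_mx [/A_ad [k [c [xs [ys pr1_v]]]] /B_ad [l [d [xs' [ys' pr2_v]]]]].
rewrite -(emb_pr v) emb_split pr1_v pr2_v; apply: inC1D; first apply: inC1D.
- rewrite (linf_sum linear_emb1); apply: inC1_sum => i _.
  by rewrite (linfZ linear_emb1) -br_emb1; apply/inC1Z/inC1_br.
- rewrite (linf_sum linear_emb2); apply: inC1_sum => i _.
  by rewrite (linfZ linear_emb2) -br_emb2; apply/inC1Z/inC1_br.
- rewrite -[pr3 v]vec_mxK [vec_mx _]matrix_sum_delta.
  rewrite linear_sum (linf_sum linear_emb3); apply: inC1_sum => i _.
  rewrite linear_sum (linf_sum linear_emb3); apply: inC1_sum => j _.
  by rewrite linearZ (linfZ linear_emb3) -br_emb_generators; apply/inC1Z/inC1_br.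
Qed.

Lemma pr1_nested_br xs y :
  pr1 (@nested_br K (prodg A B) xs y) = nested_br (map pr1 xs) (pr1 y).
Proof. by elim: xs => //= x xs <-; rewrite pr1_br. Qed.
Lemma pr2_nested_br xs y :
  pr2 (@nested_br K (prodg A B) xs y) = nested_br (map pr2 xs) (pr2 y).
Proof. by elim: xs => //= x xs <-; rewrite pr2_br. Qed.

End ProductLie.

Lemma prod_std : std_lie A -> std_lie B -> std_lie (prodg A B).
Proof.
move=> [A_lie A_ad [NA A_nil] [a [a' aa'_neq0]]] [B_lie B_ad [NB B_nil] _].
split; [exact: prod_is_lie | exact: prod_adapted | |].
- exists (maxn NA NB).+1 => -[|x xs] y //= [sz_xs].
  have pr1_0 : pr1 (nested_br xs y) = 0.
    by rewrite pr1_nested_br (nested_br_eq0_leq A_lie A_nil) // size_map sz_xs leq_maxl.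
  have pr2_0 : pr2 (nested_br xs y) = 0.
    by rewrite pr2_nested_br (nested_br_eq0_leq B_lie B_nil) // size_map sz_xs leq_maxr.
  rewrite prod_brE pr1_0 pr2_0 !br0r // cross_mx_gen0r ?pr1_0 ?pr2_0 ?linear0 ?emb0 //.
- exists (emb a 0 0), (emb a' 0 0); apply: contra aa'_neq0 => /eqP /(congr1 pr1) /=.
  by rewrite prod_brE !pr1_emb (linf0 linear_pr1) => ->.
Qed.

End Product.

Arguments linear_pr1 {K A B}.
Arguments linear_pr2 {K A B}.
Arguments linear_pr3 {K A B}.
Arguments emb0 {K A B}.
Arguments linear_emb1 {K A B}.
Arguments linear_emb2 {K A B}.
Arguments linear_emb3 {K A B}.

Section LieIso.
Variable K : fieldType.
Local Notation V L := 'rV[K]_(lg L + lr L).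

Definition lie_iso (L L' : lieb K) (f : V L -> V L') (g : V L' -> V L) :=
  [/\ linear g, cancel f g, cancel g f & forall x y, f (lbr x y) = lbr (f x) (f y)].

Lemma lie_iso_linear L L' f g : @lie_iso L L' f g -> linear f.
Proof. by case=> g_lin fK gK _ c x y; rewrite -[x]fK -[y]fK -g_lin gK !fK. Qed.

Lemma is_der_conj L L' f g (D : 'M[K]_(lg L' + lr L')) :
  @lie_iso L L' f g -> is_der D -> is_der (lin1_mx (fun x => g (f x *m D))).
Proof.
move=> iso_fg D_der; have f_lin := lie_iso_linear iso_fg.
case: iso_fg => g_lin fK gK f_br.
have conj_lin : linear (fun x => g (f x *m D)).
  exact: linear_comp (linear_comp f_lin (linear_mulmxr D)) g_lin.
have g_brl u v : lbr (g u) v = g (lbr u (f v)) by rewrite -[lbr (g u) v]fK f_br gK.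
have g_brr u v : lbr v (g u) = g (lbr (f v) u) by rewrite -[lbr v (g u)]fK f_br gK.
by move=> x y; rewrite !(mul_rV_lin1f conj_lin) f_br D_der (linfD g_lin) g_brl g_brr.
Qed.

Lemma S_algebra_iso (A B G : lieb K) f g (D : 'M[K]_(lg G + lr G)) :
  S_algebra A -> std_lie B -> @lie_iso (prodg A B) G f g -> is_der D ->
  forall a, inC1 (pr2 (g (f (emb a 0 0) *m D))).
Proof.
move=> A_S B_std iso_fg D_der a; have f_lin := lie_iso_linear iso_fg.
have [g_lin _ _ _] := iso_fg.
have conj_lin : linear (fun x => g (f x *m D)).
  exact: linear_comp (linear_comp f_lin (linear_mulmxr D)) g_lin.
by have := A_S B B_std _ (is_der_conj iso_fg D_der) a; rewrite (mul_rV_lin1f conj_lin).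
Qed.

Lemma inC1_pr1 (A B : lieb K) (x : V (prodg A B)) : inC1 x -> inC1 (pr1 x).
Proof.
case=> k [c [xs [ys ->]]]; exists k, c, (fun i => pr1 (xs i)), (fun i => pr1 (ys i)).
by rewrite (linf_sum linear_pr1); apply: eq_bigr => i _; rewrite (linfZ linear_pr1) pr1_br.
Qed.

Lemma inC1_pr2 (A B : lieb K) (x : V (prodg A B)) : inC1 x -> inC1 (pr2 x).
Proof.
case=> k [c [xs [ys ->]]]; exists k, c, (fun i => pr2 (xs i)), (fun i => pr2 (ys i)).
by rewrite (linf_sum linear_pr2); apply: eq_bigr => i _; rewrite (linfZ linear_pr2) pr2_br.
Qed.

Definition prod_swap (A B : lieb K) (x : V (prodg A B)) : V (prodg B A) :=
  emb (pr2 x) (pr1 x) (mxvec (- (vec_mx (pr3 x))^T)).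

Lemma linear_prod_swap A B : linear (@prod_swap A B).
Proof.
move=> c x y; rewrite /prod_swap linear_pr1 linear_pr2 linear_pr3 -emb_linearP.
by rewrite !linearP.
Qed.

Lemma prod_swapK A B : cancel (@prod_swap A B) (@prod_swap B A).
Proof.
move=> x; rewrite /prod_swap pr1_emb pr2_emb pr3_emb mxvecK.
by rewrite !linearN /= trmxK opprK vec_mxK emb_pr.
Qed.

Lemma prod_swap_br A B x y :
  @prod_swap A B (prod_br x y) = prod_br (prod_swap x) (prod_swap y).
Proof.
apply: prod_vec_ext; rewrite /prod_swap !(pr1_br, pr2_br, pr3_br, pr1_emb, pr2_emb, pr3_emb) //.
congr mxvec; rewrite mxvecK /cross_mx !(pr1_emb, pr2_emb) linearB /= !trmx_mul !trmxK.
by rewrite opprB.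
Qed.

Lemma lie_iso_prod_swap A B :
  @lie_iso (prodg A B) (prodg B A) (@prod_swap A B) (@prod_swap B A).
Proof.
split; [exact: linear_prod_swap | exact: prod_swapK | exact: prod_swapK | exact: prod_swap_br].
Qed.

Section ProdAssoc.
Variables A B C : lieb K.
Local Notation nA := (lg A). Local Notation nB := (lg B). Local Notation nC := (lg C).
Local Notation AB := (prodg A B). Local Notation BC := (prodg B C).
Local Notation AC := (prodg A C).

Definition prod_assoc (x : V (prodg A BC)) : V (prodg AB C) :=
  @emb K AB C
    (@emb K A B (@pr1 K A BC x) (@pr1 K B C (@pr2 K A BC x))
       (mxvec (lsubmx (vec_mx (@pr3 K A BC x) : 'M[K]_(nA, nB + nC)))))
    (@pr2 K B C (@pr2 K A BC x))
    (mxvec (col_mx (rsubmx (vec_mx (@pr3 K A BC x) : 'M[K]_(nA, nB + nC)))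
                   (vec_mx (@pr3 K B C (@pr2 K A BC x))))).

Definition prod_unassoc (y : V (prodg AB C)) : V (prodg A BC) :=
  @emb K A BC (@pr1 K A B (@pr1 K AB C y))
    (@emb K B C (@pr2 K A B (@pr1 K AB C y)) (@pr2 K AB C y)
       (mxvec (dsubmx (vec_mx (@pr3 K AB C y) : 'M[K]_(nA + nB, nC)))))
    (mxvec (row_mx (vec_mx (@pr3 K A B (@pr1 K AB C y)))
                   (usubmx (vec_mx (@pr3 K AB C y) : 'M[K]_(nA + nB, nC))))).

Lemma prod_assocK : cancel prod_assoc prod_unassoc.
Proof.
move=> x; rewrite /prod_assoc /prod_unassoc !(pr1_emb, pr2_emb, pr3_emb, mxvecK).
by rewrite col_mxKd col_mxKu hsubmxK !vec_mxK !emb_pr.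
Qed.

Lemma prod_unassocK : cancel prod_unassoc prod_assoc.
Proof.
move=> y; rewrite /prod_assoc /prod_unassoc !(pr1_emb, pr2_emb, pr3_emb, mxvecK).
by rewrite row_mxKl row_mxKr vsubmxK !vec_mxK !emb_pr.
Qed.

Lemma linear_prod_unassoc : linear prod_unassoc.
Proof.
move=> c y1 y2; rewrite /prod_unassoc !(linear_pr1, linear_pr2, linear_pr3).
by rewrite !linearP /= -add_row_mx -scale_row_mx !linearP /= !emb_linearP.
Qed.

Lemma prod_assoc_br x y : prod_assoc (prod_br x y) = prod_br (prod_assoc x) (prod_assoc y).
Proof.
apply: prod_vec_ext; rewrite /prod_assoc.
all: rewrite !(pr1_br, pr2_br, pr3_br, pr1_emb, pr2_emb, pr3_emb, mxvecK) /=.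
- rewrite prod_brE !(pr1_br, pr2_br, pr3_br, pr1_emb, pr2_emb, pr3_emb, mxvecK) /=.
  congr (emb _ _ (mxvec _)); rewrite /cross_mx !(pr1_emb, pr2_emb).
  rewrite [lsubmx (pr2 y)]lsub_pr [lsubmx (pr2 x)]lsub_pr linearB /= !mul_mx_row.
  by rewrite !row_mxKl.
- by [].
- congr mxvec; rewrite /cross_mx !(pr1_emb, pr2_emb) !lsub_emb !tr_row_mx !mul_col_mx.
  rewrite opp_col_mx add_col_mx; congr col_mx.
  rewrite [lsubmx (pr2 y)]lsub_pr [lsubmx (pr2 x)]lsub_pr linearB /= !mul_mx_row.
  by rewrite !row_mxKr.
Qed.

Lemma lie_iso_prod_assoc : lie_iso prod_assoc prod_unassoc.
Proof.
split; [exact: linear_prod_unassoc | exact: prod_assocK | exact: prod_unassocK |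
        exact: prod_assoc_br].
Qed.

Definition prod_exch (x : V (prodg B AC)) : V (prodg AB C) :=
  @emb K AB C
    (@emb K A B (@pr1 K A C (@pr2 K B AC x)) (@pr1 K B AC x)
       (mxvec (- (lsubmx (vec_mx (@pr3 K B AC x) : 'M[K]_(nB, nA + nC)))^T)))
    (@pr2 K A C (@pr2 K B AC x))
    (mxvec (col_mx (vec_mx (@pr3 K A C (@pr2 K B AC x)))
                   (rsubmx (vec_mx (@pr3 K B AC x) : 'M[K]_(nB, nA + nC))))).

Definition prod_unexch (y : V (prodg AB C)) : V (prodg B AC) :=
  @emb K B AC (@pr2 K A B (@pr1 K AB C y))
    (@emb K A C (@pr1 K A B (@pr1 K AB C y)) (@pr2 K AB C y)
       (mxvec (usubmx (vec_mx (@pr3 K AB C y) : 'M[K]_(nA + nB, nC)))))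
    (mxvec (row_mx (- (vec_mx (@pr3 K A B (@pr1 K AB C y)))^T)
                   (dsubmx (vec_mx (@pr3 K AB C y) : 'M[K]_(nA + nB, nC))))).

Lemma prod_exchK : cancel prod_exch prod_unexch.
Proof.
move=> x; rewrite /prod_exch /prod_unexch !(pr1_emb, pr2_emb, pr3_emb, mxvecK).
by rewrite col_mxKd col_mxKu !linearN /= trmxK opprK hsubmxK !vec_mxK !emb_pr.
Qed.

Lemma prod_unexchK : cancel prod_unexch prod_exch.
Proof.
move=> y; rewrite /prod_exch /prod_unexch !(pr1_emb, pr2_emb, pr3_emb, mxvecK).
by rewrite row_mxKl row_mxKr !linearN /= trmxK opprK vsubmxK !vec_mxK !emb_pr.
Qed.

Lemma linear_prod_unexch : linear prod_unexch.
Proof.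
move=> c y1 y2; rewrite /prod_unexch !(linear_pr1, linear_pr2, linear_pr3).
by rewrite !linearP /= -add_row_mx -scale_row_mx !linearP /= !emb_linearP.
Qed.

Lemma prod_exch_br x y : prod_exch (prod_br x y) = prod_br (prod_exch x) (prod_exch y).
Proof.
apply: prod_vec_ext; rewrite /prod_exch.
all: rewrite !(pr1_br, pr2_br, pr3_br, pr1_emb, pr2_emb, pr3_emb, mxvecK) /=.
- rewrite prod_brE !(pr1_br, pr2_br, pr3_br, pr1_emb, pr2_emb, pr3_emb, mxvecK) /=.
  congr (emb _ _ (mxvec _)); rewrite /cross_mx !(pr1_emb, pr2_emb).
  rewrite [lsubmx (pr2 y)]lsub_pr [lsubmx (pr2 x)]lsub_pr linearB /= !mul_mx_row.
  by rewrite !row_mxKl linearB /= !trmx_mul !trmxK opprB.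
- by [].
- congr mxvec; rewrite /cross_mx !(pr1_emb, pr2_emb) !lsub_emb !tr_row_mx !mul_col_mx.
  rewrite opp_col_mx add_col_mx; congr col_mx.
  rewrite [lsubmx (pr2 y)]lsub_pr [lsubmx (pr2 x)]lsub_pr linearB /= !mul_mx_row.
  by rewrite !row_mxKr.
Qed.

Lemma lie_iso_prod_exch : lie_iso prod_exch prod_unexch.
Proof.
split; [exact: linear_prod_unexch | exact: prod_exchK | exact: prod_unexchK |
        exact: prod_exch_br].
Qed.

End ProdAssoc.

End LieIso.

Section ProductOfSAlgebras.
Variable K : fieldType.
Local Notation V L := 'rV[K]_(lg L + lr L).

Lemma S_algebra_D12 (H L : lieb K) (D : 'M[K]_(lg (prodg H L) + lr (prodg H L))) :
  S_algebra L -> std_lie H -> is_der D -> forall l : V L, inC1 (pr1 (emb 0 l 0 *m D)).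
Proof.
move=> L_S H_std D_der l.
have := S_algebra_iso L_S H_std (lie_iso_prod_swap L H) D_der l.
by rewrite /prod_swap !(pr1_emb, pr2_emb, pr3_emb) !linear0.
Qed.

Lemma inC1_emb3 (H L : lieb K) (z : 'rV[K]_(lg H * lg L)) :
  std_lie H -> std_lie L -> @inC1 K (prodg H L) (emb 0 0 z).
Proof.
move=> [H_lie H_ad _ _] [L_lie L_ad _ _].
by apply/prod_adapted => //; rewrite lsub_emb !linear0 row_mx0.
Qed.

Lemma S_algebra_prod (H L : lieb K) : std_lie H -> std_lie L ->
  S_algebra H -> S_algebra L -> S_algebra (prodg H L).
Proof.
move=> H_std L_std H_S L_S G G_std D D_der a.
rewrite -(emb_pr a) [emb (pr1 a) _ _]emb_split !(linfD linear_emb1) !mulmxDl.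
rewrite !(linfD linear_pr2); apply: inC1D; first apply: inC1D.
- have := S_algebra_iso H_S (prod_std L_std G_std) (lie_iso_prod_assoc H L G) D_der (pr1 a).
  move/inC1_pr2; rewrite /prod_unassoc !(pr1_emb, pr2_emb).
  congr (inC1 (pr2 (_ *m D))).
  rewrite /prod_assoc !(pr1_emb, pr2_emb, pr3_emb) !(linf0 linear_pr1, linf0 linear_pr2).
  by rewrite !(linf0 linear_pr3) !linear0 col_mx0 linear0.
- have := S_algebra_iso L_S (prod_std H_std G_std) (lie_iso_prod_exch H L G) D_der (pr2 a).
  move/inC1_pr2; rewrite /prod_unexch !(pr1_emb, pr2_emb).
  congr (inC1 (pr2 (_ *m D))).
  rewrite /prod_exch !(pr1_emb, pr2_emb, pr3_emb) !(linf0 linear_pr1, linf0 linear_pr2).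
  by rewrite !(linf0 linear_pr3) !linear0 ?oppr0 ?linear0 ?col_mx0 ?linear0.
- apply/inC1_pr2/inC1_der => //.
  have [HL_lie HL_ad _ _] := prod_std H_std L_std; case: G_std => G_lie G_ad _ _.
  by apply/prod_adapted => //; rewrite !lsub_emb !linear0 !row_mx0.
Qed.

Section CharNilpotentProduct.
Variables H L : lieb K.
Hypotheses (H_std : std_lie H) (L_std : std_lie L).
Hypotheses (H_S : S_algebra H) (L_S : S_algebra L).
Local Notation G := (prodg H L).
Local Notation MG := 'M[K]_(lg G + lr G).

Definition der11 (D : MG) := lin1_mx (fun h : V H => pr1 (emb h 0 0 *m D)).
Definition der22 (D : MG) := lin1_mx (fun l : V L => pr2 (emb 0 l 0 *m D)).

Lemma linear_der11 (D : MG) : linear (fun h : V H => pr1 (emb h 0 0 *m D)).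
Proof. exact: linear_comp (linear_comp linear_emb1 (linear_mulmxr D)) linear_pr1. Qed.
Lemma linear_der22 (D : MG) : linear (fun l : V L => pr2 (emb 0 l 0 *m D)).
Proof. exact: linear_comp (linear_comp linear_emb2 (linear_mulmxr D)) linear_pr2. Qed.

Lemma der11_der (D : MG) : is_der D -> is_der (der11 D).
Proof.
case: L_std => L_lie _ _ _ D_der x y; rewrite /der11 !(mul_rV_lin1f (linear_der11 D)).
by rewrite -br_emb1 // D_der (linfD linear_pr1) !pr1_br !pr1_emb.
Qed.

Lemma der22_der (D : MG) : is_der D -> is_der (der22 D).
Proof.
case: H_std => H_lie _ _ _ D_der x y; rewrite /der22 !(mul_rV_lin1f (linear_der22 D)).
by rewrite -br_emb2 // D_der (linfD linear_pr2) !pr2_br !pr2_emb.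
Qed.

Lemma lsub_pr1_der (D : MG) (v : V G) : is_der D ->
  lsubmx (pr1 (v *m D)) = lsubmx (pr1 v *m der11 D).
Proof.
move=> D_der; have [_ H_ad _ _] := H_std.
rewrite -{1}(emb_pr v) emb_split !mulmxDl !(linfD linear_pr1) !linearD /=.
rewrite /der11 (mul_rV_lin1f (linear_der11 D)).
have -> : lsubmx (pr1 (emb 0 (pr2 v) 0 *m D)) = 0.
  by apply/H_ad; apply: S_algebra_D12.
have -> : lsubmx (pr1 (emb 0 0 (pr3 v) *m D)) = 0.
  by apply/H_ad/inC1_pr1/inC1_der => //; apply: inC1_emb3.
by rewrite !addr0.
Qed.

Lemma lsub_pr2_der (D : MG) (v : V G) : is_der D ->
  lsubmx (pr2 (v *m D)) = lsubmx (pr2 v *m der22 D).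
Proof.
move=> D_der; have [_ L_ad _ _] := L_std.
rewrite -{1}(emb_pr v) emb_split !mulmxDl !(linfD linear_pr2) !linearD /=.
rewrite /der22 (mul_rV_lin1f (linear_der22 D)).
have -> : lsubmx (pr2 (emb (pr1 v) 0 0 *m D)) = 0 by apply/L_ad; apply: H_S.
have -> : lsubmx (pr2 (emb 0 0 (pr3 v) *m D)) = 0.
  by apply/L_ad/inC1_pr2/inC1_der => //; apply: inC1_emb3.
by rewrite add0r addr0.
Qed.

Lemma lsub_apply_word_charseq (v : V G) (w : seq MG) : all_der w ->
  exists uH uL, [/\ charseq (size w) uH, charseq (size w) uL,
     lsubmx (pr1 (apply_word v w)) = lsubmx uH &
     lsubmx (pr2 (apply_word v w)) = lsubmx uL].
Proof.
have [[_ H_ad _ _] [_ L_ad _ _]] := (H_std, L_std).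
elim/last_ind: w => [|w D IH]; first by move=> _; exists (pr1 v), (pr2 v).
move=> /all_der_rcons [/IH [uH [uL [uH_ch uL_ch eqH eqL]]] D_der].
exists (uH *m der11 D), (uL *m der22 D); rewrite size_rcons apply_word_rcons.
split.
- by exists (der11 D), uH; split=> //; apply: der11_der.
- by exists (der22 D), uL; split=> //; apply: der22_der.
- by rewrite lsub_pr1_der //; apply: lsub_der_eq => //; apply: der11_der.
- by rewrite lsub_pr2_der //; apply: lsub_der_eq => //; apply: der22_der.
Qed.

Lemma char_nilpotent_prod : char_nilpotent H -> char_nilpotent L -> char_nilpotent G.
Proof.
move=> [mH H_char] [mL L_char].
have [G_lie G_ad [N G_nil] _] := prod_std H_std L_std.
apply: (@char_nilpotent_of_word_image_inC1 _ G G_lie N (maxn mH mL).+1) => // x.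
move=> [v [w [w_der sz_w ->]]].
have [uH [uL [uH_ch uL_ch eqH eqL]]] := lsub_apply_word_charseq v w_der.
have uH0 : uH = 0 by apply/H_char/(charseq_leq _ uH_ch); rewrite sz_w; lia.
have uL0 : uL = 0 by apply/L_char/(charseq_leq _ uL_ch); rewrite sz_w; lia.
by apply/G_ad; rewrite lsub_pr eqH eqL uH0 uL0 !linear0 row_mx0.
Qed.

End CharNilpotentProduct.

End ProductOfSAlgebras.

Lemma iter_prodg_ind (K : fieldType) (P : lieb K -> Prop) :
  (forall A B, P A -> P B -> P (prodg A B)) ->
  forall L1 Ls, (forall k, (k < size (L1 :: Ls))%N -> P (nth L1 (L1 :: Ls) k)) ->
  P (iter_prodg L1 Ls).
Proof.
move=> P_prod L1; elim/last_ind => [|Ls L IH] P_all; first exact: (P_all 0%N).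
rewrite /iter_prodg foldl_rcons; apply: P_prod.
  apply: IH => k lt_k; have := P_all k; rewrite -rcons_cons nth_rcons lt_k; apply.
  by rewrite size_rcons ltnS ltnW.
by have := P_all (size (L1 :: Ls)); rewrite -rcons_cons nth_rcons ltnn eqxx size_rcons; apply.
Qed.

Unset Implicit Arguments.
Local Open Scope complex_scope.

Theorem mainTheorem11 (R : realType) (L1 : lieb R[i]) (Ls : seq (lieb R[i])) :
  (forall k : nat, (k < size (L1 :: Ls))%N ->
     let L := nth L1 (L1 :: Ls) k in
     std_lie L /\ char_nilpotent L /\ S_algebra L) ->
  char_nilpotent (iter_prodg L1 Ls).
Proof.
move=> factors_ok.
pose P (L : lieb R[i]) := std_lie L /\ char_nilpotent L /\ S_algebra L.
suff : P (iter_prodg L1 Ls) by case=> _ [].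
apply: (@iter_prodg_ind _ P) factors_ok.
move=> A B [A_std [A_char A_S]] [B_std [B_char B_S]].
by split; [exact: prod_std | split; [exact: char_nilpotent_prod | exact: S_algebra_prod]].
Qed.
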